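(* Let $f\in A[X]$ be monic with discriminant $\Delta=\mathrm{Res}_X(f,f')\neq 0$, $r=v(\Delta)$, and let $N>r$ be an integer. Let $f_N\in (A/\pi^NA)[X]$ be the reduction of $f$ modulo $\pi^N$ and $S_N\subseteq A/\pi^NA$ its set of roots. Then the number of roots of $f$ in $K$ is at most $|S_N/\approx|$.
   Context: $K$ is a field complete with respect to a non-archimedean discrete valuation $v$, normalized by $v(\pi)=1$ for a uniformizer $\pi$ of the valuation ring $A=\{x\in K: v(x)\geq 0\}$; the residue field $A/\pi A$ is finite. The equivalence relation $\approx$ on $S_N$ is: $x\approx y$ iff either $N\leq r$ and $x=y$, or $N>r$ and $x\equiv y \pmod{\overline{\pi}^{\,r+1}}$, where $\overline{\pi}$ is the image of $\pi$ in $A/\pi^NA$. *)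

From HB Require Import structures.
From mathcomp Require Import all_boot all_order all_algebra.
From mathcomp Require Import boolp classical_sets cardinality.
Set Implicit Arguments. Unset Strict Implicit. Unset Printing Implicit Defensive.
Import Order.TTheory GRing.Theory Num.Theory.
Local Open Scope ring_scope.
Local Open Scope classical_set_scope.

(* A valuation is modelled as v : K -> int; its value at 0 is irrelevant
   (v(0) = +oo is encoded by the [x = 0 \/ ...] disjunctions below). *)

Definition vge (K : fieldType) (v : K -> int) (x : K) (k : int) : Prop :=
  x = 0 \/ k <= v x.

Definition vcong (K : fieldType) (v : K -> int) (k : int) (x y : K) : Prop :=
  vge v (x - y) k.

Definition valring (K : fieldType) (v : K -> int) : set K := [set x | vge v x 0].

Definition complete_dvf_finres (K : fieldType) (v : K -> int) : Prop :=
  [/\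
      (forall x y : K, x != 0 -> y != 0 -> v (x * y) = v x + v y),
      (forall x y : K, x != 0 -> y != 0 -> x + y != 0 ->
          Num.min (v x) (v y) <= v (x + y)),
      (exists pi : K, pi != 0 /\ v pi = 1),
      (forall u : nat -> K,
         (forall n : int, exists M : nat, forall i j : nat,
              (M <= i)%N -> (M <= j)%N -> vge v (u i - u j) n) ->
         exists l : K, forall n : int, exists M : nat, forall i : nat,
              (M <= i)%N -> vge v (u i - l) n) &
      (exists s : seq K, (forall b, b \in s -> valring v b) /\
         forall a, valring v a -> exists2 b, b \in s & vcong v 1 a b)].

Definition poly_over_valring (K : fieldType) (v : K -> int) (f : {poly K}) : Prop :=
  forall i : nat, valring v f`_i.

(* Elements of A whose class in A/pi^N A is a root of the reduction f_N. *)
Definition lift_rootsN (K : fieldType) (v : K -> int) (f : {poly K}) (N : int) : set K :=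
  [set a | valring v a /\ vge v f.[a] N].

(* The set S_N / ~ (for N > r), each class being represented by its full
   preimage in A: the class of (a mod pi^N) is
   { b in A : f_N(b mod pi^N) = 0, b = a mod pi^(r+1) }. *)
Definition rootsN_mod_approx (K : fieldType) (v : K -> int) (f : {poly K})
    (N r : int) : set (set K) :=
  [set C | exists2 a, lift_rootsN v f N a &
     C = [set b | lift_rootsN v f N b /\ vcong v (r + 1) b a]].

Definition rootsK (K : fieldType) (f : {poly K}) : set K := [set x | root f x].

(* A root x of f lies in A because f is monic over A. Evaluating a Bezout
   identity D = u f + w f' over A at x gives D = w(x) f'(x) with w(x) in A.
   If y is another root, f = (X - x)(X - y) q over A, so f'(x) = (x - y) q(x)
   and v(x - y) <= v(D) = r. Hence distinct roots of f are incongruent modulo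
   pi^(r+1), and each root x picks out its own class in S_N / ~. *)

From HB Require Import structures.
From mathcomp Require Import all_boot all_order all_algebra.
From mathcomp Require Import boolp classical_sets cardinality.
From mathcomp Require Import zify.
Set Implicit Arguments. Unset Strict Implicit. Unset Printing Implicit Defensive.
Import Order.TTheory GRing.Theory Num.Theory.
Local Open Scope ring_scope.

Lemma map_resultant_inj (aR rR : comNzRingType) (g : {rmorphism aR -> rR})
    (p q : {poly aR}) : injective g ->
  g (resultant p q) = resultant (map_poly g p) (map_poly g q).
Proof.
move=> g_inj; rewrite /resultant /Sylvester_mx !size_map_inj_poly ?rmorph0 //.
rewrite -det_map_mx /= map_col_mx; congr (\det (col_mx _ _));
  by apply: map_lin1_mx => w; rewrite map_poly_rV rmorphM /= map_rVpoly.
Qed.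

Lemma resultantC (R : comNzRingType) (p : {poly R}) (c : R) :
  resultant p c%:P = c ^+ (size p).-1.
Proof.
have szc : (size c%:P).-1 = 0%N by rewrite size_polyC; case: (c != 0).
rewrite /resultant; have -> : Sylvester_mx p c%:P = c%:M.
  apply/matrixP => i j; rewrite Sylvester_mxE !mxE.
  case: splitP => k ik; first by case: k ik => k kl _; exfalso; move: kl; rewrite szc.
  have {ik} -> : k = i :> nat by move: (nat_of_ord i) ik => n; rewrite szc.
  rewrite coefC subn_eq0 -val_eqE /=.
  by case: ltngtP => ij; rewrite ?mulr0n ?mulr1n ?subnn.
by rewrite det_scalar szc.
Qed.

Lemma resultant_deriv_at_root (R : comNzRingType) (p : {poly R}) (a : R) :
  (1 < size p)%N -> root p a -> exists w, resultant p p^`() = w * p^`().[a].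
Proof.
move=> p_gt1 /rootP pa0; have [dp_gt1|dp_le1] := ltnP 1 (size p^`()).
  have [[u w] /= _ /(congr1 (horner^~ a))] := resultant_in_ideal p_gt1 dp_gt1.
  by rewrite hornerC hornerD !hornerM pa0 mulr0 add0r; exists w.[a].
rewrite [p^`()]size1_polyC // hornerC resultantC.
by exists (p^`()`_0 ^+ (size p).-2); rewrite -exprSr prednK // -ltnS prednK // ltnW.
Qed.

Lemma deriv_two_roots (R : comNzRingType) (p : {poly R}) (a b : R) :
  root p a -> root p b -> GRing.lreg (b - a) ->
  exists q, p^`().[a] = q * (a - b).
Proof.
move=> /factor_theorem[h ->] /rootP; rewrite hornerM hornerXsubC mulrC => hb0 reg.
have /factor_theorem[q ->] : root h b by apply/rootP/reg; rewrite hb0 mulr0.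
exists q.[a]; rewrite derivM derivXsubC mulr1 hornerD !hornerM !hornerXsubC.
by rewrite subrr mulr0 add0r.
Qed.

Lemma monic_root_size_gt1 (R : nzRingType) (p : {poly R}) (a : R) :
  p \is monic -> root p a -> (1 < size p)%N.
Proof.
move=> p_monic pa; rewrite ltnNge; apply/negP => /size1_polyC p_const.
move: pa p_monic; rewrite p_const rootC monicE lead_coefC => /eqP-> /eqP.
by move/esym/eqP; rewrite oner_eq0.
Qed.

Section Valuation.
Variables (K : fieldType) (v : K -> int).
Hypothesis valuationM : forall x y : K, x != 0 -> y != 0 -> v (x * y) = v x + v y.
Hypothesis valuationD : forall x y : K, x != 0 -> y != 0 -> x + y != 0 ->
  Num.min (v x) (v y) <= v (x + y).

Lemma valuation1 : v 1 = 0.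
Proof.
have /eqP := valuationM (oner_neq0 K) (oner_neq0 K).
by rewrite mulr1 -subr_eq subrr eq_sym => /eqP.
Qed.

Lemma valuationN x : x != 0 -> v (- x) = v x.
Proof.
have N1_neq0 : (-1 : K) != 0 by rewrite oppr_eq0 oner_neq0.
have vN1 : v (-1) = 0.
  have := valuationM N1_neq0 N1_neq0; rewrite mulrNN mulr1 valuation1; lia.
by move=> x_neq0; rewrite -mulN1r valuationM // vN1 add0r.
Qed.

Lemma valuationX x n : x != 0 -> v (x ^+ n) = v x * n%:Z.
Proof.
move=> x_neq0; elim: n => [|n IH]; first by rewrite expr0 valuation1 mulr0.
by rewrite exprS valuationM ?expf_neq0 // IH intS mulrDr mulr1.
Qed.

Lemma vgeD x y k : vge v x k -> vge v y k -> vge v (x + y) k.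
Proof.
have [->|x_neq0] := eqVneq x 0; first by rewrite add0r.
have [->|y_neq0] := eqVneq y 0; first by rewrite addr0.
have [->|xy_neq0] := eqVneq (x + y) 0; first by left.
move=> [/eqP|vx_ge]; first by rewrite (negbTE x_neq0).
move=> [/eqP|vy_ge]; first by rewrite (negbTE y_neq0).
by right; apply: le_trans (valuationD x_neq0 y_neq0 xy_neq0); rewrite le_min vx_ge.
Qed.

Lemma vgeN x k : vge v x k -> vge v (- x) k.
Proof.
have [->|x_neq0] := eqVneq x 0; first by rewrite oppr0.
by rewrite /vge valuationN // => -[/eqP|]; [rewrite (negbTE x_neq0)|right].
Qed.

Lemma vgeM x y k l : vge v x k -> vge v y l -> vge v (x * y) (k + l).
Proof.
have [->|x_neq0] := eqVneq x 0; first by rewrite mul0r; left.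
have [->|y_neq0] := eqVneq y 0; first by rewrite mulr0; left.
move=> [/eqP|vx_ge]; first by rewrite (negbTE x_neq0).
move=> [/eqP|vy_ge]; first by rewrite (negbTE y_neq0).
by right; rewrite valuationM // lerD.
Qed.

Lemma vge_sum (I : Type) (r : seq I) (F : I -> K) k :
  (forall i, vge v (F i) k) -> vge v (\sum_(i <- r) F i) k.
Proof.
move=> F_ge; elim: r => [|i r IH]; first by rewrite big_nil; left.
by rewrite big_cons; apply: vgeD.
Qed.

Lemma vge0_root_monic f x :
  poly_over_valring v f -> f \is monic -> root f x -> vge v x 0.
Proof.
move=> fA f_monic /rootP fx0; have [->|x_neq0] := eqVneq x 0; first by left.
rewrite /vge; case: (lerP 0 (v x)) => [|vx_lt0]; [by right|exfalso].
set n := (size f).-1; pose b := v x * (n%:Z - 1).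
have size_f : size f = n.+1 by rewrite prednK // lt0n size_poly_eq0 monic_neq0.
have xn : x ^+ n = - \sum_(i < n) f`_i * x ^+ i.
  have lc : f`_n = 1 := monicP f_monic.
  move: fx0; rewrite horner_coef size_f big_ord_recr /= lc mul1r addrC.
  by move/eqP; rewrite addr_eq0 => /eqP.
have : vge v (x ^+ n) b.
  rewrite xn; apply/vgeN/vge_sum => i; rewrite -[b]add0r.
  apply: vgeM; first exact: fA.
  right; rewrite valuationX //; have := ltn_ord i; nia.
by case=> [/eqP|]; [rewrite expf_eq0 (negbTE x_neq0) andbF|rewrite valuationX //; nia].
Qed.

(* The ring structure on vR uses the section hypotheses, so it is only
   available inside this section. *)
Definition vring : {pred K} := fun x => `[< vge v x 0 >].

Lemma vring_subring : GRing.subring_closed vring.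
Proof.
split; first by apply/asboolP; right; rewrite valuation1.
  by move=> x y /asboolP x_ge0 /asboolP y_ge0; apply/asboolP/vgeD/vgeN.
move=> x y /asboolP x_ge0 /asboolP y_ge0; apply/asboolP.
by rewrite -[0]addr0; apply: vgeM.
Qed.

HB.instance Definition _ := GRing.isSubringClosed.Build K vring vring_subring.

Record vR := VR { vval : K; vvalP : vval \in vring }.
HB.instance Definition _ := [isSub for vval].
HB.instance Definition _ := [Choice of vR by <:].
HB.instance Definition _ := [SubChoice_isSubComNzRing of vR by <:].

Lemma vge0_val (a : vR) : vge v (val a) 0.
Proof. exact/asboolP/vvalP. Qed.

Definition vlift (x : K) : vR := insubd 0 x.

Lemma vliftK x : vge v x 0 -> val (vlift x) = x.
Proof. by move=> x_ge0; rewrite insubdK //; apply/asboolP. Qed.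

Definition liftp (f : {poly K}) : {poly vR} := \poly_(i < size f) vlift f`_i.

Lemma liftpK f : poly_over_valring v f -> map_poly val (liftp f) = f.
Proof.
move=> fA; apply/polyP => i; rewrite coef_map coef_poly.
case: ltnP => [_|i_ge]; last by rewrite raddf0 nth_default.
by apply: vliftK; exact: fA.
Qed.

Section MonicOverValuationRing.
Variable f : {poly K}.
Hypothesis fA : poly_over_valring v f.
Hypothesis f_monic : f \is monic.

Let liftpK_f : map_poly val (liftp f) = f := liftpK fA.

Let deriv_liftpK : map_poly val (liftp f)^`() = f^`().
Proof. by rewrite -deriv_map liftpK_f. Qed.

Let horner_lift (x : K) (p : {poly vR}) :
  vge v x 0 -> val p.[vlift x] = (map_poly val p).[x].
Proof. by move=> x_ge0; rewrite -horner_map /= vliftK. Qed.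

Let root_liftp x : root f x -> root (liftp f) (vlift x).
Proof.
move=> fx; apply/rootP/val_inj; rewrite horner_lift ?liftpK_f ?rmorph0.
  exact/rootP.
exact: vge0_root_monic fx.
Qed.

Lemma resultant_deriv_factor x : root f x ->
  exists2 w, vge v w 0 & resultant f f^`() = w * f^`().[x].
Proof.
move=> fx; have x_ge0 := vge0_root_monic fA f_monic fx.
have liftp_gt1 : (1 < size (liftp f))%N.
  rewrite -(size_map_inj_poly val_inj) ?rmorph0 // liftpK_f.
  exact: monic_root_size_gt1 f_monic fx.
have [w res_eq] := resultant_deriv_at_root liftp_gt1 (root_liftp fx).
exists (val w); first exact: vge0_val.
rewrite -{1}liftpK_f -deriv_liftpK -map_resultant_inj; last exact: val_inj.
by rewrite /= (congr1 val res_eq) rmorphM /= horner_lift.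
Qed.

Lemma deriv_root_factor x y : root f x -> root f y -> y != x ->
  exists2 q, vge v q 0 & f^`().[x] = q * (x - y).
Proof.
move=> fx fy yx_neq0.
have x_ge0 := vge0_root_monic fA f_monic fx.
have y_ge0 := vge0_root_monic fA f_monic fy.
have reg : GRing.lreg (vlift y - vlift x).
  move=> c d /(congr1 val); rewrite !rmorphM rmorphB /= !vliftK //.
  by move/(mulfI _) => cd; apply/val_inj/cd; rewrite subr_eq0.
have [q deriv_eq] := deriv_two_roots (root_liftp fx) (root_liftp fy) reg.
exists (val q); first exact: vge0_val.
move: (congr1 val deriv_eq); rewrite horner_lift // deriv_liftpK => ->.
by rewrite rmorphM rmorphB /= !vliftK.
Qed.

Lemma roots_vcong_eq x y : resultant f f^`() != 0 -> root f x -> root f y ->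
  vcong v (v (resultant f f^`()) + 1) y x -> y = x.
Proof.
move=> res_neq0 fx fy yx_cong; apply/eqP/negP => /negP yx_neq0.
have [w w_ge0 res_eq] := resultant_deriv_factor fx.
have [q q_ge0 deriv_eq] := deriv_root_factor fx fy yx_neq0.
move: res_neq0; rewrite res_eq deriv_eq !mulf_eq0 !negb_or.
move=> /and3P[w_neq0 q_neq0 xy_neq0].
have vres : v (w * (q * (x - y))) = v w + (v q + v (x - y)).
  by rewrite !valuationM ?mulf_neq0.
have vxy : v (w * (q * (x - y))) + 1 <= v (x - y).
  case: yx_cong => [/eqP|]; first by rewrite subr_eq0 (negbTE yx_neq0).
  by rewrite -opprB valuationN // -deriv_eq -res_eq.
case: w_ge0 => [/eqP|]; first by rewrite (negbTE w_neq0).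
case: q_ge0 => [/eqP|]; first by rewrite (negbTE q_neq0).
move: vres vxy; lia.
Qed.

End MonicOverValuationRing.

End Valuation.

Unset Implicit Arguments.
Set Strict Implicit.
Local Open Scope classical_set_scope.
Local Open Scope card_scope.

Theorem lemma3p5 (K : fieldType) (v : K -> int) (f : {poly K}) (N : int) :
  complete_dvf_finres v ->
  poly_over_valring v f ->
  f \is monic ->
  resultant f f^`() != 0 ->
  v (resultant f f^`()) < N ->
  rootsK f #<= rootsN_mod_approx v f N (v (resultant f f^`())).
Proof.
move=> [vM vD _ _ _] fA f_monic res_neq0 _.
set r := v (resultant f f^`()).
pose cls x := [set b | lift_rootsN v f N b /\ vcong v (r + 1) b x].
have lift_root x : root f x -> lift_rootsN v f N x.
  by move=> fx; split; [exact: vge0_root_monic fx | left; exact/rootP].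
apply/pcard_leP/injfunPex; exists cls.
  by move=> x /lift_root x_lift; exists x.
move=> x y /[!in_setE] fx fy cls_xy.
have : cls y y by split; [exact: lift_root | left; rewrite subrr].
rewrite -cls_xy => -[_ yx_cong].
exact/esym/(roots_vcong_eq vM vD fA f_monic res_neq0 fx fy yx_cong).
Qed.
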